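(* Consider the general CA-RRM with affine indices $u_f(A)=\alpha_f+\beta_f^\top\psi(A)$, $f\in\mathcal F$, assume $P(i\mid A)\in(0,1)$ for all $i\in A$ and all menus $A$ in the support, and impose the normalization $(\alpha_{f_0},\beta_{f_0})=(0,\mathbf 0)$ for a baseline rule $f_0$. Let $d=\dim\psi$. Suppose there exist $d+1$ feature values $x^{(0)},\dots,x^{(d)}$ such that: (G1) for each $k\in\{0,\dots,d\}$, the matrix $H^{(k)}$ obtained by stacking the row vectors $h_i(A)^\top$ over all multi-sided menus $A$ with $\psi(A)=x^{(k)}$ and all non-reference alternatives $i\in A\setminus\{i_0(A)\}$ has rank $|\mathcal F|-1$; (G2) the $(d+1)\times(d+1)$ matrix $X$ with $k$-th row $(1,(x^{(k)})^\top)$ has full rank. Then the full parameter vector $\{(\alpha_f,\beta_f)\}_{f\in\mathcal F}$ is globally identified (up to the normalization) from the population objects $\{P(i\mid A),\kappa^i(A),\psi(A)\}$: any two normalized parameter vectors generating the same choice probabilities on these menus coincide.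
   Context: General setting: a finite collection $\mathcal M$ of menus, each a finite set $A$ of alternatives with $|A|\ge2$. A finite rule library $\mathcal F$; each rule $f$ has an activity set $\mathcal A_f\subseteq\mathcal M$ and a recommendation $r_f(A)\in A$ for $A\in\mathcal A_f$. The recommending set is $\mathcal I_i(A)=\{f: A\in\mathcal A_f,\ r_f(A)=i\}$, the active set is $\mathcal F_A=\bigcup_{i\in A}\mathcal I_i(A)$, and $\kappa_f^i(A)=\mathbf 1\{f\in\mathcal I_i(A)\}$. The model (softmax-gated CA-RRM) gives $$P(i\mid A;\theta)=\frac{\sum_{f\in\mathcal I_i(A)}\exp(u_f(A))}{\sum_{g\in\mathcal F_A}\exp(u_g(A))},\qquad u_f(A)=\alpha_f+\beta_f^\top\psi(A),$$ with $\psi:\mathcal M\to\mathbb R^d$. A menu is multi-sided if at least two distinct alternatives are recommended by some active rule. For each multi-sided menu fix a reference alternative $i_0(A)$ with $\mathcal I_{i_0(A)}(A)\neq\varnothing$; for $i\in A\setminus\{i_0(A)\}$ let $r_i(A)=P(i\mid A)/P(i_0(A)\mid A)$ and let $h_i(A)\in\mathbb R^{|\mathcal F|}$ have entries $h_{i,f}(A)=\kappa_f^i(A)-r_i(A)\kappa_f^{i_0(A)}(A)$. Positive weights $\omega_f(x)=\exp(\alpha_f+\beta_f^\top x)$. *)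

From HB Require Import structures.
From mathcomp Require Import all_boot all_order all_algebra.
From mathcomp Require Import reals sequences exp.
Set Implicit Arguments. Unset Strict Implicit. Unset Printing Implicit Defensive.
Import Order.TTheory GRing.Theory Num.Theory.
Local Open Scope ring_scope.

Section CARRM.
Variables (R : realType) (Alt Rule : finType) (d : nat).
(* activity: act f A  <->  A \in 𝒜_f ;  recommendation r_f(A) = rec f A *)
Variables (act : Rule -> {set Alt} -> bool) (rec : Rule -> {set Alt} -> Alt).

Definition recset (i : Alt) (A : {set Alt}) : {set Rule} :=
  [set f | act f A && (rec f A == i)].

Definition activeset (A : {set Alt}) : {set Rule} :=
  \bigcup_(i in A) recset i A.

Definition kappa (f : Rule) (i : Alt) (A : {set Alt}) : R :=
  (f \in recset i A)%:R.

Definition uidx (alpha : Rule -> R) (beta : Rule -> 'rV[R]_d)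
  (psi : {set Alt} -> 'rV[R]_d) (f : Rule) (A : {set Alt}) : R :=
  alpha f + \sum_(j < d) beta f 0 j * psi A 0 j.

Definition Pmodel (alpha : Rule -> R) (beta : Rule -> 'rV[R]_d)
  (psi : {set Alt} -> 'rV[R]_d) (i : Alt) (A : {set Alt}) : R :=
  (\sum_(f in recset i A) expR (uidx alpha beta psi f A)) /
  (\sum_(g in activeset A) expR (uidx alpha beta psi g A)).

Definition multisided (A : {set Alt}) : bool :=
  [exists i in A, exists j in A, [&& i != j, recset i A != set0 & recset j A != set0]].

Definition hvec (P : Alt -> {set Alt} -> R) (i0 : {set Alt} -> Alt)
  (i : Alt) (A : {set Alt}) (f : Rule) : R :=
  kappa f i A - (P i A / P (i0 A) A) * kappa f (i0 A) A.

Definition Hrows (M : {set {set Alt}}) (psi : {set Alt} -> 'rV[R]_d)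
  (i0 : {set Alt} -> Alt) (x : 'rV[R]_d) : {set {set Alt} * Alt} :=
  [set p : {set Alt} * Alt | [&& p.1 \in M, multisided p.1, psi p.1 == x,
                                p.2 \in p.1 & p.2 != i0 p.1]].

Definition Hmat (M : {set {set Alt}}) (P : Alt -> {set Alt} -> R)
  (psi : {set Alt} -> 'rV[R]_d) (i0 : {set Alt} -> Alt) (x : 'rV[R]_d)
  : 'M[R]_(#|Hrows M psi i0 x|, #|Rule|) :=
  \matrix_(r < #|Hrows M psi i0 x|, c < #|Rule|)
    let p := enum_val r in hvec P i0 p.2 p.1 (enum_val c).

Definition Xmat (x : 'I_d.+1 -> 'rV[R]_d) : 'M[R]_(d.+1, 1 + d) :=
  \matrix_(k < d.+1) row_mx (1%:M : 'rV[R]_1) (x k).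

End CARRM.

From HB Require Import structures.
From mathcomp Require Import all_boot all_order all_algebra.
From mathcomp Require Import reals sequences exp.
From mathcomp Require Import ring lra.
Import Order.TTheory GRing.Theory Num.Theory.
Local Open Scope ring_scope.

(* At a feature value x, the vector of softmax weights (exp u_f)_f is orthogonal to
   every row h_i(A) with psi(A) = x, because the model reproduces the ratio
   P(i|A)/P(i0(A)|A).  Rank |F|-1 of H at x makes that weight vector unique up to
   scale, and the baseline weight exp 0 = 1 fixes the scale; so both parameter
   vectors give the same index u_f(x) at every design point x^(k).  The difference
   of the two affine indices then vanishes on d+1 affinely independent points,
   hence identically (rank X = d+1). *)

Lemma corank1_kernel_eq {F : fieldType} {m n} {H : 'M[F]_(m, n)} {w1 w2 : 'rV_n} {c} :
  \rank H = (n - 1)%N -> w1 *m H^T = 0 -> w2 *m H^T = 0 ->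
  w1 0 c = 1 -> w2 0 c = 1 -> w1 = w2.
Proof.
move=> rankH w1H w2H w1c w2c.
have w1K : (w1 <= kermx H^T)%MS by apply/sub_kermxP.
have w2K : (w2 <= kermx H^T)%MS by apply/sub_kermxP.
have rankK : \rank (kermx H^T) = 1%N.
  by rewrite mxrank_ker mxrank_tr rankH subKn // (leq_ltn_trans _ (ltn_ord c)).
have w1_neq0 : w1 != 0.
  by apply/eqP => w1_0; move: w1c; rewrite w1_0 mxE => /eqP; rewrite eq_sym oner_eq0.
have Kw1 : (kermx H^T <= w1)%MS by rewrite -(mxrank_leqif_sup w1K).2 rank_rV w1_neq0 rankK.
have /sub_rVP [a w2_def] : (w2 <= w1)%MS by apply: submx_trans w2K Kw1.
by move: w2c; rewrite w2_def mxE w1c mulr1 => ->; rewrite scale1r.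
Qed.

Lemma full_rank_kernel_eq0 (F : fieldType) m n (X : 'M[F]_(m, n)) (v : 'rV_n) :
  \rank X = n -> v *m X^T = 0 -> v = 0.
Proof.
move=> rankX vX; apply/eqP; rewrite -mxrank_eq0 -leqn0.
have vK : (v <= kermx X^T)%MS by apply/sub_kermxP.
by have := mxrankS vK; rewrite mxrank_ker mxrank_tr rankX subnn.
Qed.

Lemma affine_eq0_full_rank (R : realType) d (x : 'I_d.+1 -> 'rV[R]_d) a (b : 'rV_d) :
  \rank (Xmat x) = d.+1 ->
  (forall k, a + \sum_j b 0 j * x k 0 j = 0) -> a = 0 /\ b = 0.
Proof.
move=> rankX affine0.
have v0 : row_mx a%:M b = 0.
  apply: full_rank_kernel_eq0 rankX _; apply/rowP => k.
  rewrite !mxE big_split_ord /= big_ord1 -[RHS](affine0 k); congr (_ + _).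
    by rewrite !(row_mxEl, mxE) mulr1n mulr1.
  by apply: eq_bigr => j _; rewrite !(row_mxEr, mxE).
split.
  by have := congr1 (fun u : 'rV[R]_(1 + d) => u 0 (lshift d 0)) v0; rewrite row_mxEl !mxE mulr1n.
apply/rowP => j.
by have := congr1 (fun u : 'rV[R]_(1 + d) => u 0 (rshift 1 j)) v0; rewrite row_mxEr !mxE.
Qed.

Section CARRMIdentification.
Variables (R : realType) (Alt Rule : finType) (d : nat).
Variables (act : Rule -> {set Alt} -> bool) (rec : Rule -> {set Alt} -> Alt).
Variables (psi : {set Alt} -> 'rV[R]_d) (P : Alt -> {set Alt} -> R).
Variable i0 : {set Alt} -> Alt.

Lemma sum_mul_kappa (w : Rule -> R) i A :
  \sum_f w f * kappa R act rec f i A = \sum_(f in recset act rec i A) w f.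
Proof.
rewrite [RHS]big_mkcond /=; apply: eq_bigr => f _; rewrite /kappa.
by case: (f \in _); rewrite ?mulr1 ?mulr0.
Qed.

Lemma softmax_weights_orthogonal_hvec {alpha beta A i} :
  0 < P (i0 A) A ->
  Pmodel act rec alpha beta psi i A = P i A ->
  Pmodel act rec alpha beta psi (i0 A) A = P (i0 A) A ->
  \sum_f expR (uidx alpha beta psi f A) * hvec act rec P i0 i A f = 0.
Proof.
move=> P0pos Pi Pi0; rewrite /hvec.
under eq_bigr do rewrite mulrBr mulrCA.
rewrite sumrB -mulr_sumr !sum_mul_kappa -Pi -Pi0 /Pmodel.
set D := \sum_(g in activeset act rec A) _.
set T := \sum_(f in recset act rec (i0 A) A) _.
have [D_neq0 T_neq0] : D != 0 /\ T != 0.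
  split; apply: contraTneq P0pos => Z;
  by rewrite -Pi0 /Pmodel -/D -/T Z ?invr0 ?mulr0 ?mul0r ltxx.
by field; apply/andP.
Qed.

Definition affine_index (alpha : Rule -> R) (beta : Rule -> 'rV[R]_d) f (x : 'rV[R]_d) :=
  alpha f + \sum_j beta f 0 j * x 0 j.

Definition weight_row alpha beta x : 'rV[R]_#|Rule| :=
  \row_c expR (affine_index alpha beta (enum_val c) x).

Variable M : {set {set Alt}}.
Hypothesis rec_in_menu : forall f A, A \in M -> act f A -> rec f A \in A.
Hypothesis i0_recommended :
  forall A, A \in M -> multisided act rec A -> recset act rec (i0 A) A != set0.
Hypothesis P_pos : forall A i, A \in M -> i \in A -> 0 < P i A.

Definition fits alpha beta :=
  forall A i, A \in M -> i \in A -> Pmodel act rec alpha beta psi i A = P i A.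

Lemma weight_row_Hmat {alpha beta} x :
  fits alpha beta -> weight_row alpha beta x *m (Hmat act rec M P psi i0 x)^T = 0.
Proof.
move=> fit; apply/rowP => r; rewrite !mxE.
have := enum_valP r; set p := enum_val r; rewrite inE => /and5P [AM Ams /eqP psiA iA _].
have i0A : i0 p.1 \in p.1.
  have /set0Pn [g] := i0_recommended _ AM Ams.
  by rewrite inE => /andP [actg /eqP <-]; apply: rec_in_menu.
rewrite -[RHS](softmax_weights_orthogonal_hvec (P_pos _ _ AM i0A)
  (fit _ _ AM iA) (fit _ _ AM i0A)).
rewrite [RHS](reindex _ (onW_bij _ (@enum_val_bij Rule))) /=.
by apply: eq_bigr => c _; rewrite !mxE /uidx psiA.
Qed.

Lemma weight_row_baseline {alpha beta f0} x :
  alpha f0 = 0 -> beta f0 = 0 -> weight_row alpha beta x 0 (enum_rank f0) = 1.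
Proof.
move=> alpha0 beta0; rewrite mxE enum_rankK /affine_index alpha0 beta0 add0r big1 ?expR0 //.
by move=> j _; rewrite mxE mul0r.
Qed.

Lemma affine_index_eq_at_design {alpha1 beta1 alpha2 beta2 f0 x} :
  \rank (Hmat act rec M P psi i0 x) = (#|Rule| - 1)%N ->
  alpha1 f0 = 0 -> beta1 f0 = 0 -> alpha2 f0 = 0 -> beta2 f0 = 0 ->
  fits alpha1 beta1 -> fits alpha2 beta2 ->
  forall f, affine_index alpha1 beta1 f x = affine_index alpha2 beta2 f x.
Proof.
move=> rankH a10 b10 a20 b20 fit1 fit2 f.
have := corank1_kernel_eq rankH (weight_row_Hmat x fit1) (weight_row_Hmat x fit2)
  (weight_row_baseline x a10 b10) (weight_row_baseline x a20 b20).
move/(congr1 (fun w : 'rV[R]_#|Rule| => w 0 (enum_rank f))).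
by rewrite !mxE enum_rankK => /expR_inj.
Qed.

End CARRMIdentification.

Arguments affine_index_eq_at_design {R Alt Rule d act rec psi P i0 M} _ _ _
  {alpha1 beta1 alpha2 beta2 f0 x}.

Theorem theoremA1 (R : realType) (Alt Rule : finType) (d : nat)
  (M : {set {set Alt}})
  (act : Rule -> {set Alt} -> bool) (rec : Rule -> {set Alt} -> Alt)
  (psi : {set Alt} -> 'rV[R]_d)
  (P : Alt -> {set Alt} -> R)
  (i0 : {set Alt} -> Alt)
  (f0 : Rule)
  (x : 'I_d.+1 -> 'rV[R]_d) :
  (forall A, A \in M -> 1 < #|A|)%N ->
  (forall f A, A \in M -> act f A -> rec f A \in A) ->
  (forall A, A \in M -> multisided act rec A -> recset act rec (i0 A) A != set0) ->
  (forall A i, A \in M -> i \in A -> 0 < P i A < 1) ->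
  (forall k : 'I_d.+1,
     \rank (Hmat act rec M P psi i0 (x k)) = (#|Rule| - 1)%N) ->
  \rank (Xmat (x)) = d.+1 ->
  forall (alpha1 alpha2 : Rule -> R) (beta1 beta2 : Rule -> 'rV[R]_d),
  alpha1 f0 = 0 -> beta1 f0 = 0 ->
  alpha2 f0 = 0 -> beta2 f0 = 0 ->
  (forall A i, A \in M -> i \in A -> Pmodel act rec alpha1 beta1 psi i A = P i A) ->
  (forall A i, A \in M -> i \in A -> Pmodel act rec alpha2 beta2 psi i A = P i A) ->
  forall f, alpha1 f = alpha2 f /\ beta1 f = beta2 f.
Proof.
move=> _ rec_in i0_rec P_range rankH rankX alpha1 alpha2 beta1 beta2 a10 b10 a20 b20 fit1 fit2 f.
have P_pos A i : A \in M -> i \in A -> 0 < P i A.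
  by move=> AM iA; case/andP: (P_range A i AM iA).
have index_eq k := affine_index_eq_at_design rec_in i0_rec P_pos
  (rankH k) a10 b10 a20 b20 fit1 fit2 f.
have [] := @affine_eq0_full_rank _ _ x (alpha1 f - alpha2 f) (beta1 f - beta2 f) rankX.
  move=> k; under eq_bigr do rewrite !mxE mulrBl.
  by rewrite sumrB; move: (index_eq k); rewrite /affine_index; lra.
by move=> /eqP; rewrite subr_eq0 => /eqP -> /eqP; rewrite subr_eq0 => /eqP ->.
Qed.
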